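(* Let $N\ge 2$ and $0<\gamma_1\le\dots\le\gamma_N$, and let $S$ be the star centered at vertex $1$. Then for every spanning tree $T'$ on $\{1,\dots,N\}$, $$R_{\mathrm s}(S)-R_{\mathrm s}(T')\le \frac{1}{2}\log_2\!\Big(\Big(\frac{\gamma_N(1+2\gamma_1)}{\gamma_1(1+2\gamma_N)}\Big)^{N}\Big),$$ and consequently $\sup_{T'}\big(R_{\mathrm s}(S)-R_{\mathrm s}(T')\big)\to 0$ as $\gamma_1\to\infty$ (with $N$ fixed and $\gamma_1\le\dots\le\gamma_N$).
   Context: For distinct $i,j$ put $\varphi(i,j)=\log_2\!\big(\gamma_i+\frac{\gamma_i}{\gamma_i+\gamma_j}\big)$. For a spanning tree $T$ on $\{1,\dots,N\}$ with neighbor sets $A_i^T$, define $R_{\mathrm s}(T)=\frac{1}{2(N-1)}\sum_{i=1}^N \min_{j\in A_i^T}\varphi(i,j)$. *)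

From Stdlib Require Import Reals.
From mathcomp Require Import all_boot.
Set Implicit Arguments. Unset Strict Implicit. Unset Printing Implicit Defensive.
Local Open Scope R_scope.

(* Vertices {1,...,N} are represented by 'I_N; paper vertex i+1 <-> ordinal i.
   gamma : nat -> R is indexed 1-based as in the paper, so ordinal i has
   weight gamma (i.+1). *)

Definition log2 (x : R) : R := (ln x / ln 2).

Definition phi (gamma : nat -> R) (N : nat) (i j : 'I_N) : R :=
  log2 (gamma i.+1 + gamma i.+1 / (gamma i.+1 + gamma j.+1)).

Definition is_spanning_tree (N : nat) (e : rel 'I_N) : Prop :=
  symmetric e /\ irreflexive e /\
  (forall x y : 'I_N, connect e x y) /\
  #|[set p : 'I_N * 'I_N | ((val p.1 < val p.2)%N && e p.1 p.2)]| = (N - 1)%N.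

Definition nbrs (N : nat) (e : rel 'I_N) (i : 'I_N) : seq 'I_N :=
  [seq j <- enum 'I_N | e i j].

(* minimum of a nonempty list of reals (0 on the empty list, never used
   for trees with N >= 2) *)
Definition minlist (s : seq R) : R :=
  match s with [::] => 0 | x :: s' => foldr Rmin x s' end.

Definition Rs (gamma : nat -> R) (N : nat) (e : rel 'I_N) : R :=
  (/ (2 * INR (N - 1)) *
   \big[Rplus/0]_(i < N) minlist [seq phi gamma i j | j <- nbrs e i]).

Definition star (N : nat) : rel 'I_N :=
  fun i j => ((val i == 0%N) && (val j != 0%N)) || ((val j == 0%N) && (val i != 0%N)).

Definition admissible (N : nat) (gamma : nat -> R) : Prop :=
  (0 < gamma 1%N) /\
  (forall i j : nat, (1 <= i)%N -> (i <= j)%N -> (j <= N)%N -> (gamma i <= gamma j)).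
Arguments star N : clear implicits.

(* With t = gamma_i and a = gamma_1 <= gamma_j <= b = gamma_N, every rate
   phi(i,j) = log2 (t + t/(t+gamma_j)) lies between log2 (t + t/(t+b)) and
   log2 (t + t/(t+a)), and these two differ by at most log2 ((b(1+2a))/(a(1+2b))).
   So the neighbour minima of any two spanning trees (which have no isolated
   vertex) differ by at most that much at every vertex; summing over the N
   vertices and normalising gives the bound.  Since ln x <= x - 1 the bound is at
   most N/(4 a ln 2), which tends to 0 as a = gamma_1 grows. *)
From Stdlib Require Import Reals Lra Psatz.
From mathcomp Require Import all_boot.

Set Implicit Arguments.
Unset Strict Implicit.
Unset Printing Implicit Defensive.
Local Open Scope R_scope.

Definition rate (t s : R) : R := t + t / (t + s).

Definition gap_ratio (a b : R) : R := b * (1 + 2 * a) / (a * (1 + 2 * b)).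

Lemma ln_le x y : 0 < x -> x <= y -> ln x <= ln y.
Proof. by move=> x_gt0 [xy | <-]; [left; apply: ln_increasing | right]. Qed.

Lemma ln_le_sub1 x : 0 < x -> ln x <= x - 1.
Proof.
move=> x_gt0; rewrite -[x - 1]ln_exp; apply: ln_le => //.
have := exp_ineq1_le (x - 1); lra.
Qed.

Lemma ln2_gt0 : 0 < ln 2.
Proof. have := ln_lt_2; lra. Qed.

Lemma log2_le x y : 0 < x -> x <= y -> log2 x <= log2 y.
Proof.
move=> x_gt0 xy; apply: Rmult_le_compat_r; last exact: ln_le.
by left; apply: Rinv_0_lt_compat; apply: ln2_gt0.
Qed.

Lemma log2_ge0 x : 1 <= x -> 0 <= log2 x.
Proof. by move=> x_ge1; rewrite -[0](Rmult_0_l (/ ln 2)) -ln_1; apply: log2_le => //; lra. Qed.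

Lemma log2_pow x n : 0 < x -> log2 (x ^ n) = INR n * log2 x.
Proof. by move=> x_gt0; rewrite /log2 ln_pow // /Rdiv Rmult_assoc. Qed.

Lemma log2_sub_le x y r : 0 < x -> 0 < y -> 0 < r -> x <= r * y ->
  log2 x - log2 y <= log2 r.
Proof.
move=> x_gt0 y_gt0 r_gt0 le_xry.
have : log2 x <= log2 (r * y) by apply: log2_le.
by rewrite /log2 ln_mult //; lra.
Qed.

Lemma rate_gt0 t s : 0 < t -> 0 < s -> 0 < rate t s.
Proof. by move=> t_gt0 s_gt0; have := Rdiv_lt_0_compat t (t + s); rewrite /rate; lra. Qed.

Lemma rate_antitone t s1 s2 : 0 < t -> 0 < s1 -> s1 <= s2 -> rate t s2 <= rate t s1.
Proof.
move=> t_gt0 s1_gt0 s12; apply: Rplus_le_compat_l.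
by apply: Rmult_le_compat_l; [lra | apply: Rinv_le_contravar; lra].
Qed.

Lemma rate_le_gap_ratio a b t : 0 < a -> a <= b -> a <= t ->
  rate t a <= gap_ratio a b * rate t b.
Proof.
move=> a_gt0 ab a_le_t.
have den_gt0 : 0 < a * (1 + 2 * b) by nra.
have cross : rate t b * (b * (1 + 2 * a)) - rate t a * (a * (1 + 2 * b)) =
    t * (b - a) * (t * t + (a + b + 1) * t - a * b) / ((t + a) * (t + b)).
  by rewrite /rate; field; lra.
have cross_ge0 : 0 <= t * (b - a) * (t * t + (a + b + 1) * t - a * b) / ((t + a) * (t + b)).
  have quad_ge0 : 0 <= t * t + (a + b + 1) * t - a * b by nra.
  apply: Rmult_le_pos; last by left; apply: Rinv_0_lt_compat; nra.
  by apply: Rmult_le_pos => //; apply: Rmult_le_pos; lra.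
have -> : gap_ratio a b * rate t b = rate t b * (b * (1 + 2 * a)) / (a * (1 + 2 * b)).
  by rewrite /gap_ratio; field; lra.
apply: (Rmult_le_reg_r (a * (1 + 2 * b))) => //.
rewrite /Rdiv Rmult_assoc Rinv_l; lra.
Qed.

Lemma gap_ratio_ge1 a b : 0 < a -> a <= b -> 1 <= gap_ratio a b.
Proof.
move=> a_gt0 ab; apply: (Rmult_le_reg_r (a * (1 + 2 * b))); first nra.
by rewrite /gap_ratio /Rdiv Rmult_assoc Rinv_l; nra.
Qed.

Lemma log2_gap_ratio_le a b : 0 < a -> a <= b -> log2 (gap_ratio a b) <= / (2 * a * ln 2).
Proof.
move=> a_gt0 ab; have ln2_pos := ln2_gt0.
have sub1_le : gap_ratio a b - 1 <= / (2 * a).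
  have -> : gap_ratio a b - 1 = (b - a) / (a * (1 + 2 * b)) by rewrite /gap_ratio; field; nra.
  apply: (Rmult_le_reg_r (2 * a * (a * (1 + 2 * b)))); first nra.
  by field_simplify; nra.
have := @ln_le_sub1 (gap_ratio a b); have := gap_ratio_ge1 a_gt0 ab.
rewrite /log2 Rinv_mult /Rdiv => ? ln_le_sub.
apply: Rmult_le_compat_r; [left; exact: Rinv_0_lt_compat | lra].
Qed.

Section Minlist.

Variables (T : eqType) (f : T -> R).

Lemma foldr_Rmin_le x s :
  foldr Rmin x (map f s) <= x /\ forall j, j \in s -> foldr Rmin x (map f s) <= f j.
Proof.
elim: s => [|y s [le_x le_s]] /=; first by split; [lra |].
split; first exact: Rle_trans (Rmin_r _ _) le_x.
move=> j; rewrite in_cons => /orP [/eqP -> | js]; first exact: Rmin_l.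
exact: Rle_trans (Rmin_r _ _) (le_s j js).
Qed.

Lemma minlist_le s j : j \in s -> minlist (map f s) <= f j.
Proof.
case: s => [|y s] //=; have [le_y le_s] := foldr_Rmin_le (f y) s.
by rewrite in_cons => /orP [/eqP -> | /le_s].
Qed.

Lemma foldr_Rmin_ge c x s :
  c <= x -> (forall j, j \in s -> c <= f j) -> c <= foldr Rmin x (map f s).
Proof.
elim: s => [|y s IH] //= le_cx ge_c; apply: Rmin_glb.
  by apply: ge_c; rewrite in_cons eqxx.
by apply: IH => // j js; apply: ge_c; rewrite in_cons js orbT.
Qed.

Lemma minlist_ge s c : s <> [::] -> (forall j, j \in s -> c <= f j) -> c <= minlist (map f s).
Proof.
case: s => [|y s] //= _ ge_c; apply: foldr_Rmin_ge; first by apply: ge_c; rewrite in_cons eqxx.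
by move=> j js; apply: ge_c; rewrite in_cons js orbT.
Qed.

End Minlist.

Lemma mem_nbrs N (e : rel 'I_N) i j : (j \in nbrs e i) = e i j.
Proof. by rewrite /nbrs mem_filter mem_enum andbT. Qed.

Lemma exists_ord_neq N (i : 'I_N) : (2 <= N)%N -> exists k : 'I_N, k != i.
Proof.
move=> N_ge2; have [i0 | i_neq0] := eqVneq (val i) 0%N.
  by exists (Ordinal N_ge2); rewrite -val_eqE i0.
by exists (Ordinal (ltn_trans (ltn0Sn 0) N_ge2)); rewrite -val_eqE eq_sym.
Qed.

Lemma connected_has_nbr N (e : rel 'I_N) (i : 'I_N) : (2 <= N)%N ->
  (forall x y, connect e x y) -> exists j, e i j.
Proof.
move=> N_ge2 conn; have [k k_neq_i] := exists_ord_neq i N_ge2.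
move/connectP: (conn i k) => [[|z p] /= path_p last_p].
  by move: k_neq_i; rewrite last_p eqxx.
by case/andP: path_p => e_iz _; exists z.
Qed.

Lemma star_has_nbr N (i : 'I_N) : (2 <= N)%N -> exists j, star N i j.
Proof.
move=> N_ge2; rewrite /star; have [_ | _] := eqVneq (val i) 0%N.
  by exists (Ordinal N_ge2).
by exists (Ordinal (ltn_trans (ltn0Sn 0) N_ge2)).
Qed.

Lemma nbrs_nonempty N (e : rel 'I_N) i : (exists j, e i j) -> nbrs e i <> [::].
Proof. by case=> j e_ij nbrs0; have := mem_nbrs e i j; rewrite nbrs0 e_ij. Qed.

Lemma big_Rplus_sub_le N (F G : 'I_N -> R) c :
  (forall i, F i - G i <= c) ->
  \big[Rplus/0]_(i < N) F i - \big[Rplus/0]_(i < N) G i <= INR N * c.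
Proof.
elim: N F G => [|n IH] F G le_FG; first by rewrite !big_ord0 /=; lra.
rewrite !big_ord_recl S_INR.
have := IH (fun i => F (lift ord0 i)) (fun i => G (lift ord0 i)) (fun i => le_FG _).
have := le_FG ord0; lra.
Qed.

Section StarVersusTree.

Variables (N : nat) (gamma : nat -> R).
Hypotheses (N_ge2 : (2 <= N)%N) (adm : admissible N gamma).

Let a := gamma 1%N.
Let b := gamma N.

Lemma gamma_bounds (i : 'I_N) : a <= gamma i.+1 /\ gamma i.+1 <= b.
Proof. by case: adm => _ mono; split; apply: mono => //; apply: ltn_ord. Qed.

Lemma gamma1_gt0 : 0 < a.
Proof. by case: adm. Qed.

Lemma gamma1_le_gammaN : a <= b.
Proof. by case: adm => _ mono; apply: mono => //; apply: ltn_trans N_ge2. Qed.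

Lemma phi_le_rate_gamma1 (i j : 'I_N) : phi gamma i j <= log2 (rate (gamma i.+1) a).
Proof.
have [ai _] := gamma_bounds i; have [aj _] := gamma_bounds j; have := gamma1_gt0 => a_pos.
by apply: log2_le; [apply: rate_gt0; lra | apply: rate_antitone; lra].
Qed.

Lemma rate_gammaN_le_phi (i j : 'I_N) : log2 (rate (gamma i.+1) b) <= phi gamma i j.
Proof.
have [ai _] := gamma_bounds i; have [aj jb] := gamma_bounds j; have := gamma1_gt0 => a_pos.
by apply: log2_le; [apply: rate_gt0; lra | apply: rate_antitone; lra].
Qed.

Lemma min_phi_star_sub_le (T' : rel 'I_N) (i : 'I_N) : is_spanning_tree T' ->
  minlist [seq phi gamma i j | j <- nbrs (star N) i] -
  minlist [seq phi gamma i j | j <- nbrs T' i] <= log2 (gap_ratio a b).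
Proof.
case=> _ [_ [conn _]]; have [j star_ij] := star_has_nbr i N_ge2.
have star_le : minlist [seq phi gamma i j | j <- nbrs (star N) i] <= log2 (rate (gamma i.+1) a).
  by apply: Rle_trans (phi_le_rate_gamma1 i j); apply: minlist_le; rewrite mem_nbrs.
have tree_ge : log2 (rate (gamma i.+1) b) <= minlist [seq phi gamma i j | j <- nbrs T' i].
  by apply: minlist_ge => [|k _]; [exact/nbrs_nonempty/connected_has_nbr | exact: rate_gammaN_le_phi].
have [ai _] := gamma_bounds i; have := gamma1_gt0 => a_pos; have := gamma1_le_gammaN => ab.
have := @log2_sub_le (rate (gamma i.+1) a) (rate (gamma i.+1) b) (gap_ratio a b).
have := gap_ratio_ge1 a_pos ab; have := rate_le_gap_ratio a_pos ab ai.
have := @rate_gt0 (gamma i.+1) a; have := @rate_gt0 (gamma i.+1) b; lra.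
Qed.

Lemma Rs_star_sub_le (T' : rel 'I_N) : is_spanning_tree T' ->
  Rs gamma (star N) - Rs gamma T' <= / 2 * (INR N * log2 (gap_ratio a b)).
Proof.
move=> tree; have sum_le := big_Rplus_sub_le (fun i => min_phi_star_sub_le i tree).
have log2_ge0 := log2_ge0 (gap_ratio_ge1 gamma1_gt0 gamma1_le_gammaN).
have N1_ge1 : 1 <= INR (N - 1) by apply: (le_INR 1); apply/leP; rewrite subn_gt0.
have N_ge0 := pos_INR N.
(* the normalisation 1/(2(N-1)) is at most 1/2 *)
rewrite /Rs -Rmult_minus_distr_l; apply: (Rmult_le_reg_l (2 * INR (N - 1))); first lra.
rewrite -Rmult_assoc Rinv_r; last lra.
have := Rmult_le_pos _ _ N_ge0 log2_ge0; nra.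
Qed.

Lemma Rs_star_sub_le_N_div_gamma1 (T' : rel 'I_N) : is_spanning_tree T' ->
  Rs gamma (star N) - Rs gamma T' <= INR N / (4 * a * ln 2).
Proof.
move=> tree; apply: Rle_trans (Rs_star_sub_le tree) _.
have log2_le := log2_gap_ratio_le gamma1_gt0 gamma1_le_gammaN.
have a_pos := gamma1_gt0; have ln2_pos := ln2_gt0; have N_ge0 := pos_INR N.
have -> : INR N / (4 * a * ln 2) = / 2 * (INR N * / (2 * a * ln 2)) by field; lra.
by apply: Rmult_le_compat_l; [lra | apply: Rmult_le_compat_l].
Qed.

End StarVersusTree.

Theorem mainTheorem8 :
  (forall (N : nat) (gamma : nat -> R), (2 <= N)%N -> admissible N gamma ->
     forall T' : rel 'I_N, is_spanning_tree T' ->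
       Rs gamma (star N) - Rs gamma T' <=
        / 2 * log2 (((gamma N * (1 + 2 * gamma 1%N)) /
                     (gamma 1%N * (1 + 2 * gamma N))) ^ N))
  /\
  (forall N : nat, (2 <= N)%N ->
     forall eps : R, 0 < eps ->
       exists M : R, forall gamma : nat -> R, admissible N gamma -> M <= gamma 1%N ->
         forall T' : rel 'I_N, is_spanning_tree T' ->
           Rs gamma (star N) - Rs gamma T' <= eps).
Proof.
split=> [N gamma N_ge2 adm T' tree | N N_ge2 eps eps_gt0].
  rewrite -/(gap_ratio _ _) log2_pow; first exact: Rs_star_sub_le.
  by have := gap_ratio_ge1 (gamma1_gt0 adm) (gamma1_le_gammaN N_ge2 adm); lra.
have ln2_pos := ln2_gt0.
exists (INR N / (4 * eps * ln 2)) => gamma adm a_ge T' tree.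
apply: Rle_trans (Rs_star_sub_le_N_div_gamma1 N_ge2 adm tree) _.
have a_pos := gamma1_gt0 adm.
have -> : INR N / (4 * gamma 1%N * ln 2) = INR N / (4 * eps * ln 2) * (eps / gamma 1%N).
  by field; lra.
apply: Rle_trans (Rmult_le_compat_r _ _ _ _ a_ge) _.
  by left; apply: Rdiv_lt_0_compat.
by right; field; lra.
Qed.
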